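(* Consider a product state $|\phi^{(L)}\rangle\otimes|\phi^{(R)}\rangle$ in which two modes of each factor form a dual-rail qubit, and these four modes are input to Type I fusion. Assume the fusion heralds success and that the four input modes indeed carry a pair of dual-rail qubits, so that (with modes suitably permuted, listing the left qubit's modes then the right qubit's modes) the terms affecting a successful fusion are $c^{(L)}_{10}c^{(R)}_{10}|\phi^{(L)}_{10}\rangle|\phi^{(R)}_{10}\rangle|1,0,1,0\rangle + c^{(L)}_{01}c^{(R)}_{01}|\phi^{(L)}_{01}\rangle|\phi^{(R)}_{01}\rangle|0,1,0,1\rangle$, with the internal states of the input photons pure. If the relevant input photons are all ideal (mutually indistinguishable), the output state is (up to normalization) $c^{(L)}_{10}c^{(R)}_{10}|\phi^{(L)}_{10}\rangle|\phi^{(R)}_{10}\rangle|1,0\rangle\pm c^{(L)}_{01}c^{(R)}_{01}|\phi^{(L)}_{01}\rangle|\phi^{(R)}_{01}\rangle|0,1\rangle$, with sign $+$ for measurement pattern $(1,0)$ and $-$ for $(0,1)$. If the photons are fully distinguishable, then for either measurement outcome the output state is the even mixture of the two unentangled states $c^{(L)}_{10}c^{(R)}_{10}|\phi^{(L)}_{10}\rangle|\phi^{(R)}_{10}\rangle|1,0\rangle$ and $c^{(L)}_{01}c^{(R)}_{01}|\phi^{(L)}_{01}\rangle|\phi^{(R)}_{01}\rangle|0,1\rangle$.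
   Context: Photonic model: $a_i^\dagger(\xi)$ creates a photon in spatial mode $i$ with internal state $|\xi\rangle$; linear optics acts on spatial modes only; photon-number-resolving (PNR) detection reveals only photon number per spatial mode, and post-measurement states are obtained by projecting and tracing out internal states of measured photons. A dual-rail qubit is a pair of modes with basis $|\mathbf 0\rangle=|1,0\rangle$, $|\mathbf 1\rangle=|0,1\rangle$. Hadamard beamsplitter on ordered pair $(p,q)$: $a_p^\dagger\mapsto(a_p^\dagger+a_q^\dagger)/\sqrt2$, $a_q^\dagger\mapsto(a_p^\dagger-a_q^\dagger)/\sqrt2$. Generalized $X$ measurement on two modes: apply the Hadamard beamsplitter, PNR-measure both, post-select on exactly one photon total (pattern $(1,0)$ or $(0,1)$). Type I fusion of two dual-rail qubits with modes $(1,2)$ and $(3,4)$: perform a generalized $X$ measurement on the two middle modes $(2,3)$; on success the unmeasured modes $(1,4)$ are treated as a single dual-rail qubit. ''Ideal''/''fully distinguishable'' mean pairwise internal-state overlaps $1$/$0$. *)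

(* First-quantized model of the two-photon sector of four
   spatial modes (paper's modes 1..4 = ordinals 0..3), each photon carrying a
   spatial mode and a pure internal state in C^d, tensored with an abstract
   "rest" system (the states |phi^{(L)}>, |phi^{(R)}> of the other modes). *)
From HB Require Import structures.
From mathcomp Require Import all_boot all_order all_algebra.
Set Implicit Arguments. Unset Strict Implicit. Unset Printing Implicit Defensive.
Import Order.TTheory GRing.Theory Num.Theory.
Local Open Scope ring_scope.

Definition m1 : 'I_4 := @Ordinal 4 0 isT.
Definition m2 : 'I_4 := @Ordinal 4 1 isT.
Definition m3 : 'I_4 := @Ordinal 4 2 isT.
Definition m4 : 'I_4 := @Ordinal 4 3 isT.

Section Photonics.
Variable C : numClosedFieldType.
Variables d mL mR : nat.

(* index of the rest system: left factor rest (x) right factor rest *)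
Definition env := ('I_mL * 'I_mR)%type.
Definition plabel := ('I_4 * 'I_d)%type.
Definition istate := 'I_d -> C.
(* two-photon (first-quantized, symmetric) wavefunction tensored with rest *)
Definition state2 := env -> plabel -> plabel -> C.
(* density operator on rest (x) one remaining photon *)
Definition dens := env * plabel -> env * plabel -> C.

Definition overlap (u v : istate) : C := \sum_k (u k)^* * v k.

Definition delta (i j : 'I_4) : C := (i == j)%:R.

(* a_i^dag(u) a_j^dag(v) |vac> in first quantization (symmetrized) *)
Definition sym2 (i : 'I_4) (u : istate) (j : 'I_4) (v : istate) :
  plabel -> plabel -> C :=
  fun x y => delta x.1 i * u x.2 * (delta y.1 j * v y.2)
           + delta x.1 j * v x.2 * (delta y.1 i * u y.2).

Definition prodenv (f : 'I_mL -> C) (g : 'I_mR -> C) : env -> C :=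
  fun e => f e.1 * g e.2.

(* The input |phi^L> (x) |phi^R>, restricted (by hypothesis of the paper) to
   its components in which modes (1,2) carry a dual-rail qubit and modes (3,4)
   carry a dual-rail qubit:
     (cL10 |phL10>|1,0> + cL01 |phL01>|0,1>) (x) (cR10 |phR10>|1,0> + cR01 |phR01>|0,1>)
   with pure internal states xL10 (photon in mode 1), xL01 (mode 2),
   xR10 (mode 3), xR01 (mode 4). *)
Definition dual_rail_input (cL10 cL01 cR10 cR01 : C)
  (phL10 phL01 : 'I_mL -> C) (phR10 phR01 : 'I_mR -> C)
  (xL10 xL01 xR10 xR01 : istate) : state2 :=
  fun e x y =>
      cL10 * cR10 * prodenv phL10 phR10 e * sym2 m1 xL10 m3 xR10 x y
    + cL10 * cR01 * prodenv phL10 phR01 e * sym2 m1 xL10 m4 xR01 x y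
    + cL01 * cR10 * prodenv phL01 phR10 e * sym2 m2 xL01 m3 xR10 x y
    + cL01 * cR01 * prodenv phL01 phR01 e * sym2 m2 xL01 m4 xR01 x y.

(* Linear optics on spatial modes only: a_p^dag |-> \sum_q U q p a_q^dag,
   acting identically on internal states, applied to both photons. *)
Definition lin_optics (U : 'M[C]_4) (Psi : state2) : state2 :=
  fun e x y => \sum_(p < 4) \sum_(q < 4) U x.1 p * U y.1 q * Psi e (p, x.2) (q, y.2).

(* Hadamard beamsplitter on ordered pair (p,q):
   a_p^dag |-> (a_p^dag + a_q^dag)/sqrt2, a_q^dag |-> (a_p^dag - a_q^dag)/sqrt2 *)
Definition hadamard_bs (p q : 'I_4) : 'M[C]_4 :=
  let s := (sqrtC (2 : C))^-1 in
  \matrix_(r, c)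
    (if c == p then (if r == p then s else if r == q then s else 0)
     else if c == q then (if r == p then s else if r == q then - s else 0)
     else (r == c)%:R).

Definition nphot (i : 'I_4) (x y : plabel) : nat := (x.1 == i) + (y.1 == i).

Definition pnr_project (p q : 'I_4) (np nq : nat) (Psi : state2) : state2 :=
  fun e x y => if (nphot p x y == np) && (nphot q x y == nq) then Psi e x y else 0.

(* Post-measurement (unnormalized) state: trace out the measured photon
   (its mode lies in [meas]; internal state traced out), keeping the rest
   system and the remaining photon, which lies in an unmeasured mode. *)
Definition trace_measured (meas : pred 'I_4) (Psi : state2) : dens :=
  fun a b =>
    if ~~ meas a.2.1 && ~~ meas b.2.1 then
      \sum_(w : plabel | meas w.1) Psi a.1 a.2 w * (Psi b.1 b.2 w)^*
    else 0.

(* Type I fusion of dual-rail qubits (1,2) and (3,4): generalized X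
   measurement on (2,3) with PNR outcome (n2, n3); output on modes (1,4). *)
Definition typeI_fusion (n2 n3 : nat) (Psi : state2) : dens :=
  trace_measured (fun i => (i == m2) || (i == m3))
    (pnr_project m2 m3 n2 n3 (lin_optics (hadamard_bs m2 m3) Psi)).

Definition outer (v : env * plabel -> C) : dens := fun a b => v a * (v b)^*.

Definition branch (c : C) (ps : env -> C) (i : 'I_4) (u : istate) :
  env * plabel -> C :=
  fun a => c * ps a.1 * delta a.2.1 i * u a.2.2.

Definition normalized4 (a b c e : istate) : Prop :=
  [/\ overlap a a = 1, overlap b b = 1, overlap c c = 1 & overlap e e = 1].

Definition pairwise_overlaps4 (k : C) (a b c e : istate) : Prop :=
  [/\ overlap a b = k, overlap a c = k, overlap a e = k & overlap b c = k]
  /\ (overlap b e = k /\ overlap c e = k).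

Definition ideal_photons (a b c e : istate) : Prop :=
  normalized4 a b c e /\ pairwise_overlaps4 1 a b c e.

Definition distinguishable_photons (a b c e : istate) : Prop :=
  normalized4 a b c e /\ pairwise_overlaps4 0 a b c e.

End Photonics.

From HB Require Import structures.
From mathcomp Require Import all_boot all_order all_algebra ring.
Import Order.TTheory GRing.Theory Num.Theory.
Set Implicit Arguments. Unset Strict Implicit.
Local Open Scope ring_scope.

(* After the Hadamard beamsplitter on modes 2 and 3, exactly one photon in
   modes 2,3 can only come from the input terms |1,0,1,0> and |0,1,0,1>: the
   cross terms put zero or two photons there.  The remaining photon sits in
   mode 1 or 4, and the two branches pick up the sign of a_3^dag in the
   beamsplitter.  Tracing out the internal index l of the detected photon
   gives 1/2 * sum_l amp_a(l) amp_b(l)^*, i.e. the outer products of the two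
   branches weighted by internal overlaps: norms on the diagonal and the
   overlap of the two measured photons off the diagonal.  Ideal photons make
   every overlap 1 (so all internal states coincide) and the output is pure;
   fully distinguishable ones kill the coherences, leaving the even mixture. *)

Section TypeIFusion.
Variables (C : numClosedFieldType) (d mL mR : nat).

Lemma sum_delta_mull (f : 'I_4 -> C) (i : 'I_4) :
  \sum_(p < 4) delta C p i * f p = f i.
Proof.
rewrite (bigD1 i) //= /delta eqxx mul1r big1 ?addr0 // => p /negbTE ->.
by rewrite mul0r.
Qed.

Definition lin_optics2 (U : 'M[C]_4) (S : plabel d -> plabel d -> C)
    (x y : plabel d) : C :=
  \sum_(p < 4) \sum_(q < 4) U x.1 p * U y.1 q * S (p, x.2) (q, y.2).

Lemma lin_optics2_sym2 U i (u : istate C d) j v x y :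
  lin_optics2 U (sym2 i u j v) x y
  = U x.1 i * u x.2 * (U y.1 j * v y.2) + U x.1 j * v x.2 * (U y.1 i * u y.2).
Proof.
rewrite /lin_optics2 /sym2 /=.
transitivity (\sum_(p < 4)
  (delta C p i * (U x.1 p * u x.2 * \sum_(q < 4) delta C q j * (U y.1 q * v y.2))
 + delta C p j * (U x.1 p * v x.2 * \sum_(q < 4) delta C q i * (U y.1 q * u y.2)))).
  apply: eq_bigr => p _; rewrite !mulr_sumr -big_split; apply: eq_bigr => q _ /=.
  ring.
by rewrite big_split /= !sum_delta_mull.
Qed.

Lemma sum_measured_mode (i : 'I_4) (G : 'I_d -> C) :
  (i == m2) || (i == m3) ->
  \sum_(w : plabel d | (w.1 == m2) || (w.1 == m3)) (if w.1 == i then G w.2 else 0)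
  = \sum_(l < d) G l.
Proof.
move=> meas_i.
rewrite (eq_bigl (fun w : plabel d => ((w.1 == m2) || (w.1 == m3)) && xpredT w.2));
  last by move=> w; rewrite andbT.
rewrite -(pair_big (fun j : 'I_4 => (j == m2) || (j == m3)) xpredT
                   (fun j l => if j == i then G l else 0)) /=.
rewrite (bigD1 i) //= [X in _ + X]big1 ?addr0 => [|j /andP[_ /negbTE ->]].
  by apply: eq_bigr => l _; rewrite eqxx.
by rewrite big1.
Qed.

Lemma overlap_conjC (u v : istate C d) : overlap v u = (overlap u v)^*.
Proof.
rewrite /overlap rmorph_sum; apply: eq_bigr => k _.
by rewrite rmorphM /= conjCK mulrC.
Qed.

Lemma overlap1_eq (u v : istate C d) :
  overlap u u = 1 -> overlap v v = 1 -> overlap u v = 1 -> v =1 u.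
Proof.
move=> uu vv uv k.
have vu : overlap v u = 1 by rewrite overlap_conjC uv rmorph1.
have dist0 : \sum_(l < d) `|u l - v l| ^+ 2 = 0.
  transitivity (overlap u u - overlap u v - overlap v u + overlap v v); last first.
    by rewrite uu vv uv vu; ring.
  rewrite /overlap -!sumrB -big_split /=; apply: eq_bigr => l _.
  rewrite normCKC rmorphB /=; ring.
have := psumr_eq0P (fun l _ => exprn_ge0 2 (normr_ge0 (u l - v l))) dist0 (i := k) isT.
by move/eqP; rewrite sqrf_eq0 normr_eq0 subr_eq0 => /eqP.
Qed.

Lemma invsqrtC2_mul_conj : (sqrtC 2)^-1 * ((sqrtC 2)^-1)^* = 2^-1 :> C.
Proof. by rewrite geC0_conj ?invr_ge0 ?sqrtC_ge0 ?ler0n // -invfM -expr2 sqrtCK. Qed.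

Definition heralded_mode (n3 : nat) : 'I_4 := if n3 is 0 then m2 else m3.

Lemma pnr_project_heralded (Phi : state2 C d mL mR) n2 n3 e x w :
  (n2 + n3 = 1)%N -> ~~ ((x.1 == m2) || (x.1 == m3)) -> (w.1 == m2) || (w.1 == m3) ->
  pnr_project m2 m3 n2 n3 Phi e x w = if w.1 == heralded_mode n3 then Phi e x w else 0.
Proof.
move=> n23 /norP[/negbTE x2 /negbTE x3].
rewrite /pnr_project /nphot x2 x3 !add0n.
by case/orP => /eqP ->; move: n23; case: n2 n3 => [|[|?]] [|[|?]].
Qed.

Section DualRailInput.
Variables (cL10 cL01 cR10 cR01 : C)
  (phL10 phL01 : 'I_mL -> C) (phR10 phR01 : 'I_mR -> C)
  (xL10 xL01 xR10 xR01 : istate C d).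

Let Psi := dual_rail_input cL10 cL01 cR10 cR01 phL10 phL01 phR10 phR01
                           xL10 xL01 xR10 xR01.

Lemma lin_optics_dual_rail_input U e x y :
  lin_optics U Psi e x y =
    cL10 * cR10 * prodenv phL10 phR10 e * lin_optics2 U (sym2 m1 xL10 m3 xR10) x y
  + cL10 * cR01 * prodenv phL10 phR01 e * lin_optics2 U (sym2 m1 xL10 m4 xR01) x y
  + cL01 * cR10 * prodenv phL01 phR10 e * lin_optics2 U (sym2 m2 xL01 m3 xR10) x y
  + cL01 * cR01 * prodenv phL01 phR01 e * lin_optics2 U (sym2 m2 xL01 m4 xR01) x y.
Proof.
rewrite /lin_optics /lin_optics2 /Psi /dual_rail_input.
rewrite !mulr_sumr -!big_split; apply: eq_bigr => p _ /=.
rewrite !mulr_sumr -!big_split; apply: eq_bigr => q _ /=.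
ring.
Qed.

Definition branch10 : env mL mR * plabel d -> C :=
  branch (cL10 * cR10) (prodenv phL10 phR10) m1 xL10.
Definition branch01 : env mL mR * plabel d -> C :=
  branch (cL01 * cR01) (prodenv phL01 phR01) m4 xR01.

(* Amplitude, up to the beamsplitter factor 1/sqrt2, of the unmeasured photon
   state [a] when the measured photon is found with internal index [l]; the
   sign comes from a_3^dag |-> (a_2^dag - a_3^dag)/sqrt2. *)
Definition fusion_amp (n3 : nat) (a : env mL mR * plabel d) (l : 'I_d) : C :=
  (-1) ^+ n3 * branch10 a * xR10 l + branch01 a * xL01 l.

Lemma fusion_amp_measured n3 a l :
  (a.2.1 == m2) || (a.2.1 == m3) -> fusion_amp n3 a l = 0.
Proof.
by rewrite /fusion_amp /branch10 /branch01 /branch /delta => /orP[] /eqP ->;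
  rewrite !(mulr0, mul0r) addr0.
Qed.

Lemma lin_optics_hadamard_heralded n3 e x l :
  (n3 <= 1)%N -> ~~ ((x.1 == m2) || (x.1 == m3)) ->
  lin_optics (hadamard_bs C m2 m3) Psi e x (heralded_mode n3, l)
  = (sqrtC 2)^-1 * fusion_amp n3 (e, x) l.
Proof.
case: n3 => [|[|//]] _; case: x => [[[|[|[|[|//]]]] ?] k] //= _.
all: rewrite lin_optics_dual_rail_input !lin_optics2_sym2 /fusion_amp /branch10.
all: rewrite /branch01 /branch /delta /= !mxE /=; ring.
Qed.

Lemma typeI_fusionE n2 n3 a b : (n2 + n3 = 1)%N ->
  typeI_fusion n2 n3 Psi a b
  = 2^-1 * \sum_(l < d) fusion_amp n3 a l * (fusion_amp n3 b l)^*.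
Proof.
move=> n23; have n3_le1 : (n3 <= 1)%N by rewrite -n23 leq_addl.
rewrite /typeI_fusion /trace_measured /=.
case: ifP => [/andP[ua ub] | /negbT].
  rewrite -invsqrtC2_mul_conj mulr_sumr -(sum_measured_mode (i := heralded_mode n3));
    last by case: (n3).
  apply: eq_bigr => -[j l] /= meas_j.
  rewrite !pnr_project_heralded //=; case: eqP => [-> | _]; last by rewrite mul0r.
  case: a ua => e x ua; case: b ub => e' x' ub.
  by rewrite !lin_optics_hadamard_heralded // rmorphM /=; ring.
rewrite negb_and !negbK => /orP[] meas_ab.
all: rewrite big1 ?mulr0 // => l _; rewrite (fusion_amp_measured n3 l meas_ab).
all: by rewrite ?mul0r ?rmorph0 ?mulr0.
Qed.

Lemma sum_fusion_amp n3 a b :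
  \sum_(l < d) fusion_amp n3 a l * (fusion_amp n3 b l)^*
  = branch10 a * (branch10 b)^* * overlap xR10 xR10
  + (-1) ^+ n3 * (branch10 a * (branch01 b)^* * overlap xL01 xR10
                  + branch01 a * (branch10 b)^* * overlap xR10 xL01)
  + branch01 a * (branch01 b)^* * overlap xL01 xL01.
Proof.
rewrite /overlap; do ![rewrite mulr_sumr | rewrite -big_split].
apply: eq_bigr => l _ /=.
rewrite /fusion_amp !(rmorphD, rmorphM) rmorph_sign /= -signr_odd.
by case: (odd n3); rewrite ?expr0 ?expr1; ring.
Qed.

End DualRailInput.
End TypeIFusion.

Theorem proposition2 (C : numClosedFieldType) (d mL mR : nat)
  (cL10 cL01 cR10 cR01 : C)
  (phL10 phL01 : 'I_mL -> C) (phR10 phR01 : 'I_mR -> C)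
  (xL10 xL01 xR10 xR01 : 'I_d -> C) (n2 n3 : nat) :
  (n2 + n3 = 1)%N ->
  let Psi := dual_rail_input cL10 cL01 cR10 cR01 phL10 phL01 phR10 phR01
                             xL10 xL01 xR10 xR01 in
  let rho := typeI_fusion n2 n3 Psi in
  let alpha := cL10 * cR10 in
  let beta := cL01 * cR01 in
  let psa := prodenv phL10 phR10 in
  let psb := prodenv phL01 phR01 in
  (ideal_photons xL10 xL01 xR10 xR01 ->
     exists lam : C, 0 < lam /\
       forall a b, rho a b =
         lam * outer (fun z => branch alpha psa m1 xL10 z
                               + (-1) ^+ n3 * branch beta psb m4 xL10 z) a b)
  /\
  (distinguishable_photons xL10 xL01 xR10 xR01 ->
     exists lam : C, 0 < lam /\
       forall a b, rho a b =
         lam * (outer (branch alpha psa m1 xL10) a b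
                + outer (branch beta psb m4 xR01) a b)).
Proof.
move=> n23 Psi rho alpha beta psa psb.
have half_gt0 : 0 < 2^-1 :> C by rewrite invr_gt0 ltr0n.
split=> [[[nL10 nL01 nR10 nR01] [[_ _ oL10R01 oL01R10] _]]
        |[[_ nL01 nR10 _] [[_ _ _ oL01R10] _]]];
  exists 2^-1; split=> // a b;
  rewrite /rho typeI_fusionE // sum_fusion_amp (overlap_conjC xL01) oL01R10 nL01 nR10.
  rewrite rmorph1 /outer /branch01 /branch10 /branch /= !(overlap1_eq nL10 nR01 oL10R01).
  rewrite !(rmorphD, rmorphM) rmorph_sign /= -signr_odd.
  by case: (odd n3); rewrite ?expr0 ?expr1 /alpha /beta /psa /psb /prodenv; ring.
by rewrite rmorph0 /outer /branch01 /branch10 /alpha /beta /psa /psb; ring.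
Qed.
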